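(* Let $G=(V,E)$ be a control flow graph, let $p$ be a predicate node with successors $s_1,s_2$ in $G$ and with at least two successors in $A_p$, and let $i\in\{1,2\}$. For each maximal path from $s_i$ in $G$ there exists a maximal path in $A_p$ starting from a node of $V_i$ with the same order of the first occurrences of all nodes from $V_p\setminus\{p\}$, and vice versa (for each maximal path in $A_p$ starting from a node of $V_i$ there exists a maximal path from $s_i$ in $G$ with the same order of the first occurrences of all nodes from $V_p\setminus\{p\}$).
   Context: A control flow graph (CFG) is a finite directed graph $G=(V,E)$ in which every node has at most two outgoing edges; nodes with exactly two outgoing edges are predicate nodes. A path from $n_1$ is a nonempty finite or infinite sequence of nodes with each adjacent pair an edge; it is maximal if it is infinite or its last node has no successor. $V_p$ is the set of nodes occurring on all maximal paths from $p$ in $G$. For $V'\subseteq V$, a $V'$-interval from $x$ to $y$ is a finite path $n_1\ldots n_k$ in $G$ with $k\ge 2$, $n_1=x\in V'$, $n_k=y\in V'$, and $n_i\notin V'$ for $1<i<k$. $A_p$ is the directed graph with node set $V_p$ and an edge $(x,y)$ iff there is a $V_p$-interval from $x$ to $y$ in $G$. For $i\in\{1,2\}$, $V_i$ is the set of nodes $n\in V_p$ such that there is a finite path in $G$ from $s_i$ to $n$ whose nodes other than the last one all lie outside $V_p$ (i.e., a path $s_i\ldots n\in (V\setminus V_p)^*.V_p$; possibly $n=s_i$). *)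

From mathcomp Require Import all_boot.
Set Implicit Arguments. Unset Strict Implicit. Unset Printing Implicit Defensive.

Section CFG.
Variable T : finType.

(* A path: nonempty finite sequence [x :: s] or infinite sequence f. *)
Inductive gpath : Type :=
  | FinP (x : T) (s : seq T)
  | InfP (f : nat -> T).

Fixpoint fin_path (r : T -> T -> Prop) (x : T) (s : seq T) : Prop :=
  match s with
  | [::] => True
  | y :: s' => r x y /\ fin_path r y s'
  end.

Definition is_path (r : T -> T -> Prop) (q : gpath) : Prop :=
  match q with
  | FinP x s => fin_path r x s
  | InfP f => forall n, r (f n) (f n.+1)
  end.

Definition start (q : gpath) : T :=
  match q with FinP x _ => x | InfP f => f 0 end.

Definition maximal (r : T -> T -> Prop) (q : gpath) : Prop :=
  match q with
  | FinP x s => ~ (exists y, r (last x s) y)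
  | InfP _ => True
  end.

Definition node_at (q : gpath) (n : nat) (y : T) : Prop :=
  match q with
  | FinP x s => n <= size s /\ nth x (x :: s) n = y
  | InfP f => f n = y
  end.

Definition occurs (y : T) (q : gpath) : Prop := exists n, node_at q n y.

Definition Vp (E : rel T) (p : T) (y : T) : Prop :=
  forall q, is_path (fun a b => E a b) q -> maximal (fun a b => E a b) q ->
    start q = p -> occurs y q.

Definition interval (E : rel T) (V' : T -> Prop) (x y : T) : Prop :=
  V' x /\ V' y /\
  exists s : seq T, fin_path (fun a b => E a b) x (rcons s y) /\
                    (forall z, z \in s -> ~ V' z).

Definition Ap (E : rel T) (p : T) (x y : T) : Prop :=
  Vp E p x /\ Vp E p y /\ interval E (Vp E p) x y.

Definition Vi (E : rel T) (p si : T) (n : T) : Prop :=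
  Vp E p n /\
  exists s : seq T, fin_path (fun a b => E a b) si s /\ last si s = n /\
                    (forall z, z \in belast si s -> ~ Vp E p z).

Definition is_CFG (E : rel T) : Prop := forall x, #|[set y | E x y]| <= 2.

Definition first_idx (q : gpath) (y : T) (n : nat) : Prop :=
  node_at q n y /\ forall m, m < n -> ~ node_at q m y.

Definition first_occ_seq (W : T -> Prop) (q : gpath) (l : seq T) : Prop :=
  uniq l /\
  (forall y, y \in l <-> (W y /\ occurs y q)) /\
  (forall i j, i < j < size l ->
     exists ni nj, first_idx q (nth (start q) l i) ni /\
                   first_idx q (nth (start q) l j) nj /\ ni < nj).

Definition same_first_order (W : T -> Prop) (q1 q2 : gpath) : Prop :=
  exists l, first_occ_seq W q1 l /\ first_occ_seq W q2 l.

End CFG.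

From mathcomp Require Import all_boot zify.
From Stdlib Require Import ClassicalEpsilon.
Set Implicit Arguments. Unset Strict Implicit. Unset Printing Implicit Defensive.

(* Let y1 <> y2 be two A_p-successors of p; neither is p, since an A_p-loop at
   p would yield an infinite path from p meeting no other node of V_p.  Along a
   maximal path of G, every occurrence of y1 is followed by one of y2: prefixing
   the rest of the path with the V_p-interval from p to y1 gives a maximal path
   from p, which must contain y2, and y2 is not on the interval.  Symmetrically
   y2 is followed by y1, so every maximal path of G through y1 is infinite and
   meets V_p infinitely often.  Every maximal path from s_i contains y1, and the
   subsequence of its V_p-nodes is a maximal A_p-path from a node of V_i with the
   same first occurrences.  Conversely, concatenating the V_p-intervals of an
   A_p-path (after a prefix from s_i) gives a path of G whose V_p-nodes are
   exactly those of the A_p-path, in the same order. *)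

Definition enumerates (P : nat -> Prop) (g : nat -> nat) : Prop :=
  (forall k, g k < g k.+1) /\ (forall n, P n <-> exists k, g k = n).

Lemma incr_ltn_mono (g : nat -> nat) :
  (forall k, g k < g k.+1) -> {mono g : i j / i < j}.
Proof.
move=> g_incr i j; have g_homo := homo_ltn ltn_trans g_incr.
apply/idP/idP => [|/g_homo //]; rewrite !ltnNge; apply: contra.
exact: ltnW_homo.
Qed.

Lemma ex_enumerates (P : nat -> Prop) :
  (forall a, exists m, a < m /\ P m) -> exists g, enumerates P g.
Proof.
move=> infP; pose Pb m : bool := excluded_middle_informative (P m).
have PbP m : reflect (P m) (Pb m) := sumboolP _.
have exP : exists m, Pb m by have [m [_ /PbP]] := infP 0; exists m.
have exPa a : exists m, (a < m) && Pb m.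
  by have [m [am /PbP]] := infP a; exists m; rewrite am.
pose g k := iter k (fun a => ex_minn (exPa a)) (ex_minn exP).
have g0_min : Pb (g 0) /\ forall m, Pb m -> g 0 <= m.
  by rewrite /g /=; case: ex_minnP => m m_ok m_min; split.
have gS_min k : (g k < g k.+1) && Pb (g k.+1) /\
                forall m, (g k < m) && Pb m -> g k.+1 <= m.
  by rewrite /g iterS -/(g k); case: ex_minnP => m m_ok m_min; split.
have g_incr k : g k < g k.+1 by case: (gS_min k) => /andP [].
have g_ge k : k <= g k by elim: k => // k IHk; apply: leq_ltn_trans IHk (g_incr k).
have gP k : P (g k).
  by apply/PbP; case: k => [|k]; [case: g0_min|case: (gS_min k) => /andP []].
exists g; split=> // n; split=> [/PbP Pn|[k <-] //].
have ex_above : exists k, n < g k by exists n.+1; apply: g_ge.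
case: (ex_minnP ex_above) => -[|k] n_lt min_k.
  by have := proj2 g0_min n Pn; rewrite leqNgt n_lt.
have gk_le : g k <= n by rewrite leqNgt; apply/negP => /min_k; rewrite ltnn.
exists k; apply/eqP; rewrite eqn_leq gk_le leqNgt /=; apply/negP => gk_lt.
by have := proj2 (gS_min k) n; rewrite gk_lt Pn leqNgt n_lt => /(_ isT).
Qed.

Section Enumerates.
Variables (P : nat -> Prop) (g : nat -> nat).
Hypothesis g_enum : enumerates P g.

Lemma enumerates_gap k c : g k < c < g k.+1 -> ~ P c.
Proof.
case: g_enum => /incr_ltn_mono g_mono /(_ c) g_onto c_gap /g_onto [j gj].
by move: c_gap; rewrite -gj !g_mono; lia.
Qed.

Lemma enumerates_before c : c < g 0 -> ~ P c.
Proof.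
by case: g_enum => /incr_ltn_mono g_mono /(_ c) g_onto c_lt /g_onto [j gj];
  move: c_lt; rewrite -gj g_mono.
Qed.

End Enumerates.

Section Paths.
Variable T : finType.
Implicit Types (r : T -> T -> Prop) (x y z : T) (s : seq T) (q : gpath T).

Lemma fin_path_nth r x s j : fin_path r x s -> j < size s ->
  r (nth x (x :: s) j) (nth x (x :: s) j.+1).
Proof.
elim: s x j => [|y s IHs] x [|j] //= [rxy ys] j_lt //.
have := IHs y j ys j_lt => /=.
by rewrite !(set_nth_default y x) //= ltnW.
Qed.

Lemma fin_path_cat r x s1 s2 :
  fin_path r x (s1 ++ s2) <-> fin_path r x s1 /\ fin_path r (last x s1) s2.
Proof. by elim: s1 x => [|y s1 IHs] x /=; [tauto|rewrite IHs; tauto]. Qed.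

Lemma fin_path_rcons r x s y :
  fin_path r x (rcons s y) <-> fin_path r x s /\ r (last x s) y.
Proof. by rewrite -cats1 fin_path_cat /=; tauto. Qed.

Lemma fin_path_map_iota r (f : nat -> T) a n :
  (forall k, a <= k < a + n -> r (f k) (f k.+1)) ->
  fin_path r (f a) [seq f m | m <- iota a.+1 n].
Proof.
elim: n a => [|n IHn] a f_path //=; split; first by apply: f_path; lia.
by apply: IHn => k k_in; apply: f_path; lia.
Qed.

Lemma last_map_iota (f : nat -> T) a n :
  last (f a) [seq f m | m <- iota a.+1 n] = f (a + n).
Proof. by elim: n a => [|n IHn] a /=; rewrite ?addn0 // IHn addSnnS. Qed.

Lemma belast_map_iota (f : nat -> T) a n :
  belast (f a) [seq f m | m <- iota a.+1 n] = [seq f m | m <- iota a n].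
Proof. by elim: n a => [|n IHn] a //=; rewrite IHn. Qed.

Lemma last_take x s n : n <= size s -> last x (take n s) = nth x (x :: s) n.
Proof.
elim: s x n => [|y s IHs] x [|n] //= n_le.
by rewrite IHs // (set_nth_default x).
Qed.

Lemma node_at0 q y : node_at q 0 y -> y = start q.
Proof. by case: q => [x s [_ <-]|f <-]. Qed.

Definition prepend x s q : gpath T :=
  match q with
  | FinP y t => FinP x (s ++ y :: t)
  | InfP f => InfP (fun n => if n <= size s then nth x (x :: s) n
                             else f (n - (size s).+1))
  end.

Lemma start_prepend x s q : start (prepend x s q) = x.
Proof. by case: q. Qed.

Lemma is_path_prepend r x s q : is_path r q -> fin_path r x (rcons s (start q)) ->
  is_path r (prepend x s q).
Proof.
case: q => [y t|f] /= q_path /fin_path_rcons [s_path s_last].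
  exact/fin_path_cat.
move=> n; case: (ltngtP n (size s)) => [n_lt|n_gt|->].
- exact: fin_path_nth.
- by rewrite (_ : n.+1 - _ = (n - (size s).+1).+1) //; lia.
- by rewrite subnn -last_nth.
Qed.

Lemma maximal_prepend r x s q : maximal r q -> maximal r (prepend x s q).
Proof. by case: q => [y t|f] //=; rewrite last_cat. Qed.

Lemma occurs_prepend x s q z : occurs z (prepend x s q) -> z \in x :: s \/ occurs z q.
Proof.
case: q => [y t|f] [n] /=.
  rewrite -cat_cons nth_cat size_cat /= => -[n_le <-].
  case: ifP => n_lt; first by left; apply: mem_nth.
  right; exists (n - (size s).+1); split; first by lia.
  by apply: set_nth_default => /=; lia.
case: ifP => n_le <-; first by left; apply: mem_nth.
by right; exists (n - (size s).+1).
Qed.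

Lemma ex_suffix r q n z : is_path r q -> maximal r q -> node_at q n z ->
  exists q', [/\ is_path r q', maximal r q', start q' = z &
    forall j w, node_at q' j w -> node_at q (n + j) w].
Proof.
case: q => [x s|f] /=; last first.
  move=> f_path _ fn; exists (InfP (fun m => f (n + m))).
  by split=> //= [m|]; rewrite ?addnS ?addn0.
move=> s_path s_max [n_le nth_n].
have last_n : last x (take n s) = z by rewrite last_take.
have drop_n : drop n (x :: s) = z :: drop n s.
  by rewrite (drop_nth x) /= ?nth_n ?ltnS.
move: s_path s_max; rewrite -[s](cat_take_drop n) fin_path_cat last_cat last_n.
rewrite cat_take_drop => -[_ path_n] max_n.
exists (FinP z (drop n s)); split=> // j w /= [j_le <-].
split; first by rewrite size_drop in j_le; lia.
rewrite -drop_n nth_drop; apply: set_nth_default => /=; rewrite size_drop in j_le; lia.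
Qed.

Lemma ex_maximal (E : rel T) u :
  exists q, [/\ is_path (fun a b => E a b) q, maximal (fun a b => E a b) q &
              start q = u].
Proof.
pose next x := if [pick y | E x y] is Some y then y else x.
pose f n := iter n next u.
case: (excluded_middle_informative (exists n, ~~ E (f n) (f n.+1))) => [stuck|].
  case: (ex_minnP stuck) => m stuck_m min_m.
  exists (FinP u [seq f k | k <- iota 1 m]); split=> //=.
    apply: (@fin_path_map_iota _ f 0) => k k_lt; apply/negPn/negP => /min_m; lia.
  rewrite -[u]/(f 0) last_map_iota add0n => -[y Efy].
  move: stuck_m; rewrite /f iterS -/(f m) /next.
  by case: pickP => [y' -> //|no_succ]; rewrite no_succ in Efy.
move=> never_stuck; exists (InfP f); split=> //= n.
by apply/negPn/negP => stuck_n; apply: never_stuck; exists n.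
Qed.

End Paths.

Section FirstOccurrences.
Variables (T : finType) (W : T -> Prop).

Lemma ex_first_occ_seq (h : nat -> T) : exists l, first_occ_seq W (InfP h) l.
Proof.
pose fi y := if excluded_middle_informative (exists n, h n == y) is left ex
             then ex_minn ex else 0.
have fiP y : occurs y (InfP h) -> first_idx (InfP h) y (fi y).
  move=> [n hn]; rewrite /fi; case: excluded_middle_informative => [ex|[]];
    last by exists n; apply/eqP.
  by case: (ex_minnP ex) => m /eqP hm min_m; split=> // k /= k_lt /eqP /min_m; lia.
pose l := sort (relpre fi leq)
  [seq y <- enum T | excluded_middle_informative (W y /\ occurs y (InfP h))].
have l_uniq : uniq l by rewrite sort_uniq filter_uniq // enum_uniq.
have mem_l y : y \in l <-> W y /\ occurs y (InfP h).
  by rewrite mem_sort mem_filter mem_enum andbT; split=> /sumboolP.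
have l_sorted : sorted (relpre fi leq) l.
  by apply: sort_sorted => ? ?; apply: leq_total.
clearbody l fi; exists l; split=> //; split=> // i j /andP [i_lt j_lt].
have i_lt' : i < size l by apply: ltn_trans j_lt.
set a := nth _ l i; set b := nth _ l j.
have [_ /fiP a_first] := (mem_l a).1 (mem_nth _ i_lt').
have [_ /fiP b_first] := (mem_l b).1 (mem_nth _ j_lt).
exists (fi a), (fi b); split=> //; split=> //.
have fi_le : fi a <= fi b.
  apply: (sorted_leq_nth (leT := relpre fi leq)) => //; last exact: ltnW.
  - by move=> ? ? ?; apply: leq_trans.
  - by move=> ?; apply: leqnn.
rewrite ltn_neqAle fi_le andbT; apply: contraTneq (i_lt) => fi_ab.
have ab : a = b by rewrite -(proj1 a_first) -(proj1 b_first) /= fi_ab.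
by move/eqP: ab; rewrite nth_uniq // => /eqP ->; rewrite ltnn.
Qed.

Lemma first_occ_seq_subseq (F h : nat -> T) (g : nat -> nat) l :
  (forall k, g k < g k.+1) -> (forall k, F (g k) = h k) ->
  (forall n, W (F n) -> exists k, g k = n) ->
  first_occ_seq W (InfP h) l -> first_occ_seq W (InfP F) l.
Proof.
move=> /incr_ltn_mono g_mono Fg g_onto [l_uniq [mem_l l_order]].
have first_idx_g y n : W y -> first_idx (InfP h) y n -> first_idx (InfP F) y (g n).
  move=> Wy [/= hn min_n]; split=> [|m m_lt /= Fm]; first by rewrite /= Fg.
  have [k gk] := g_onto m (eq_ind_r W Wy Fm).
  by apply: (min_n k); rewrite /= -?Fg ?gk // -g_mono gk.
split=> //; split.
  move=> y; rewrite mem_l; split=> -[Wy [n yn]]; split=> //.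
    by exists (g n); rewrite /= Fg.
  have [k gk] := g_onto n (eq_ind_r W Wy yn).
  by exists k; rewrite /= -Fg gk.
move=> i j ij; have [ni [nj [i_first [j_first ni_lt]]]] := l_order i j ij.
have [i_lt j_lt] : i < size l /\ j < size l by case/andP: ij; split=> //; lia.
have W_nth k : k < size l -> W (nth (h 0) l k) by move=> /(mem_nth (h 0)) /mem_l [].
exists (g ni), (g nj); rewrite /= !(set_nth_default (h 0) (F 0)) // g_mono.
by split; [|split]; try apply: first_idx_g; try exact: W_nth.
Qed.

Lemma same_first_order_subseq (F h : nat -> T) (g : nat -> nat) :
  (forall k, g k < g k.+1) -> (forall k, F (g k) = h k) ->
  (forall n, W (F n) -> exists k, g k = n) ->
  same_first_order W (InfP F) (InfP h).
Proof.
move=> g_incr Fg g_onto; have [l l_first] := ex_first_occ_seq h.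
by exists l; split=> //; apply: first_occ_seq_subseq l_first.
Qed.

End FirstOccurrences.

Section Flatten.
Variables (T : finType) (v : nat -> T) (bs : nat -> seq T).

(* [flatten_blocks] is the infinite sequence [v 0 :: bs 0 ++ v 1 :: bs 1 ++ ...];
   [flatten_pos n] is the (block, offset) pair of its [n]-th element. *)
Definition flatten_step (kj : nat * nat) : nat * nat :=
  if kj.2 < size (bs kj.1) then (kj.1, kj.2.+1) else (kj.1.+1, 0).
Definition flatten_pos n := iter n flatten_step (0, 0).
Definition flatten_blocks n :=
  nth (v (flatten_pos n).1) (v (flatten_pos n).1 :: bs (flatten_pos n).1)
      (flatten_pos n).2.
Fixpoint block_start k := if k is k'.+1 then block_start k' + (size (bs k')).+1 else 0.

Lemma flatten_pos_block k j :
  j <= size (bs k) -> flatten_pos (block_start k + j) = (k, j).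
Proof.
elim: k j => [|k IHk] j.
  elim: j => [|j IHj] // j_lt.
  rewrite addnS /flatten_pos iterS -/(flatten_pos _) (IHj (ltnW j_lt)).
  by rewrite /flatten_step j_lt.
elim: j => [|j IHj] j_le.
  rewrite addn0 [block_start _]/= addnS /flatten_pos iterS -/(flatten_pos _) IHk //.
  by rewrite /flatten_step ltnn.
rewrite addnS /flatten_pos iterS -/(flatten_pos _) (IHj (ltnW j_le)).
by rewrite /flatten_step j_le.
Qed.

Lemma flatten_blocksE k j : j <= size (bs k) ->
  flatten_blocks (block_start k + j) = nth (v k) (v k :: bs k) j.
Proof. by move=> j_le; rewrite /flatten_blocks flatten_pos_block. Qed.

Lemma flatten_blocks_start k : flatten_blocks (block_start k) = v k.
Proof. by rewrite -[block_start k]addn0 flatten_blocksE. Qed.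

Lemma block_start_decomp n : exists k j, j <= size (bs k) /\ n = block_start k + j.
Proof.
elim: n => [|n [k [j [j_le ->]]]]; first by exists 0, 0.
case: (ltngtP j (size (bs k))) => [j_lt|j_gt|j_eq].
- by exists k, j.+1; rewrite addnS.
- by move: j_le; rewrite leqNgt j_gt.
- by exists k.+1, 0; rewrite /= addn0 j_eq addnS.
Qed.

Lemma block_start_ltS k : block_start k < block_start k.+1.
Proof. by rewrite /= addnS ltnS leq_addr. Qed.

Lemma flatten_blocks_path (r : T -> T -> Prop) :
  (forall k, fin_path r (v k) (rcons (bs k) (v k.+1))) ->
  forall n, r (flatten_blocks n) (flatten_blocks n.+1).
Proof.
move=> blocks_path n; have [k [j [j_le ->]]] := block_start_decomp n.
have := fin_path_nth (blocks_path k) (_ : j < size (rcons (bs k) (v k.+1))).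
rewrite size_rcons ltnS -rcons_cons !nth_rcons /= !ltnS eqSS => /(_ j_le).
rewrite -addnS; case: (ltngtP j (size (bs k))) => [j_lt|j_gt|j_eq].
- by rewrite !flatten_blocksE.
- by move: j_le; rewrite leqNgt j_gt.
- by rewrite flatten_blocksE // j_eq -/(block_start k.+1) flatten_blocks_start.
Qed.

Lemma same_first_order_flatten (W : T -> Prop) (o : nat) (h : nat -> T) :
  (forall k, v (k + o) = h k) ->
  (forall k z, z \in bs k -> ~ W z) -> (forall k, k < o -> ~ W (v k)) ->
  same_first_order W (InfP flatten_blocks) (InfP h).
Proof.
move=> vh W_bs W_v; apply: (same_first_order_subseq (g := fun k => block_start (k + o))).
- by move=> k; rewrite addSn; apply: block_start_ltS.
- by move=> k; rewrite flatten_blocks_start vh.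
move=> n; have [k [[|j] [j_le ->]]] := block_start_decomp n.
  rewrite addn0 flatten_blocks_start => Wvk; exists (k - o).
  by rewrite subnK //; case: (ltnP k o) => // /W_v.
by rewrite flatten_blocksE //= => /(W_bs k _ (mem_nth (v k) j_le)).
Qed.

End Flatten.

Section Intervals.
Variables (T : finType) (E : rel T) (p : T).
Local Notation G := (fun a b : T => E a b).

Lemma Ap_of_segment (f : nat -> T) a b : (forall n, E (f n) (f n.+1)) -> a < b ->
  Vp E p (f a) -> Vp E p (f b) -> (forall c, a < c < b -> ~ Vp E p (f c)) ->
  Ap E p (f a) (f b).
Proof.
move=> f_path ab Vp_a Vp_b Vp_gap; do 4!split=> //.
exists [seq f m | m <- iota a.+1 (b - a.+1)]; split.
  have -> : rcons [seq f m | m <- iota a.+1 (b - a.+1)] (f b) =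
            [seq f m | m <- iota a.+1 (b - a)].
    rewrite -cats1 (_ : b - a = b - a.+1 + 1) ?iotaD ?map_cat; last by lia.
    by rewrite (_ : a.+1 + _ = b) //; lia.
  exact: fin_path_map_iota.
by move=> z /mapP [m]; rewrite mem_iota => m_in ->; apply: Vp_gap; lia.
Qed.

Section Enumeration.
Variables (f : nat -> T) (g : nat -> nat).
Hypotheses (f_path : forall n, E (f n) (f n.+1))
           (g_enum : enumerates (fun n => Vp E p (f n)) g).

Lemma Ap_enumerated k : Ap E p (f (g k)) (f (g k.+1)).
Proof.
have [g_incr g_Vp] := g_enum.
apply: Ap_of_segment => //; try by apply/g_Vp; eexists.
by move=> c; apply: enumerates_gap g_enum k c.
Qed.

Lemma Vi_enumerated : Vi E p (f 0) (f (g 0)).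
Proof.
split; first by apply/(proj2 g_enum); exists 0.
exists [seq f m | m <- iota 1 (g 0)]; split; first exact: fin_path_map_iota.
split; first exact: last_map_iota.
rewrite belast_map_iota => z /mapP [c]; rewrite mem_iota => c_lt ->.
by apply: (enumerates_before g_enum (c := c)); lia.
Qed.

End Enumeration.

Lemma Vp_last_Ap x s : fin_path (Ap E p) x s -> Vp E p x -> Vp E p (last x s).
Proof. by elim: s x => [|y s IHs] x //= [[_ [Vp_y _]] s_path] _; apply: IHs. Qed.

Lemma occurs_Vp_after_prefix s q y : is_path G q -> maximal G q ->
  fin_path G p (rcons s (start q)) -> Vp E p y -> y <> p -> y \notin s -> occurs y q.
Proof.
move=> q_path q_max s_path Vp_y y_p y_s.
have := Vp_y _ (is_path_prepend q_path s_path) (maximal_prepend p s q_max).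
move=> /(_ (start_prepend _ _ _)) /occurs_prepend [|//].
by rewrite inE => /orP [/eqP //|y_in]; rewrite y_in in y_s.
Qed.

Lemma Ap_loop_Vp y : Ap E p p p -> Vp E p y -> y = p.
Proof.
move=> [_ [_ [_ [_ [s [s_path s_out]]]]]] Vp_y.
pose loop := InfP (flatten_blocks (fun=> p) (fun=> s)).
have [] := Vp_y loop (flatten_blocks_path (fun=> s_path)) I (flatten_blocks_start _ _ 0).
move=> n /=; have [k [[|j] [j_le ->]]] := block_start_decomp (fun=> s) n.
  by rewrite addn0 flatten_blocks_start.
by rewrite flatten_blocksE //= => sj; case: (s_out y) => //; rewrite -sj mem_nth.
Qed.

Lemma occurs_after_Ap_succ a b q m : Ap E p p a -> Vp E p b -> b <> p -> b <> a ->
  is_path G q -> maximal G q -> node_at q m a -> exists2 m', m < m' & node_at q m' b.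
Proof.
move=> [_ [_ [_ [_ [s [s_path s_out]]]]]] Vp_b b_p b_a q_path q_max q_ma.
have [q' [q'_path q'_max q'_start q'_nodes]] := ex_suffix q_path q_max q_ma.
have b_s : b \notin s by apply/negP => /s_out.
rewrite -q'_start in s_path.
have [[|j] q'_jb] := occurs_Vp_after_prefix q'_path q'_max s_path Vp_b b_p b_s.
  by move/node_at0: q'_jb; rewrite q'_start.
by exists (m + j.+1); [rewrite addnS ltnS leq_addr|apply: q'_nodes].
Qed.

Lemma Ap_succ_neq_p y y' : Ap E p p y -> Ap E p p y' -> y <> y' -> y <> p.
Proof.
move=> Ap_y [_ [Vp_y' _]] y_y' y_p; rewrite y_p in Ap_y y_y'.
exact/y_y'/esym/(Ap_loop_Vp Ap_y).
Qed.

End Intervals.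

Section TwoSuccessors.
Variables (T : finType) (E : rel T) (p y1 y2 : T).
Hypotheses (y12 : y1 <> y2) (Ap_y1 : Ap E p p y1) (Ap_y2 : Ap E p p y2).
Local Notation G := (fun a b : T => E a b).

Lemma Vp_Ap_succ : Vp E p y1 /\ Vp E p y2.
Proof. by case: Ap_y1 => _ []; case: Ap_y2 => _ []. Qed.

Lemma Ap_succ_recurs q m : is_path G q -> maximal G q -> node_at q m y1 ->
  forall N, exists2 m', N <= m' & node_at q m' y1.
Proof.
move=> q_path q_max q_m; have [Vp1 Vp2] := Vp_Ap_succ.
have y1_p := Ap_succ_neq_p Ap_y1 Ap_y2 y12.
have y2_p := Ap_succ_neq_p Ap_y2 Ap_y1 (nesym y12).
elim=> [|N [m' N_le q_m']]; first by exists m.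
have [m2 m'_lt q_m2] :=
  occurs_after_Ap_succ Ap_y1 Vp2 y2_p (nesym y12) q_path q_max q_m'.
have [m3 m2_lt q_m3] := occurs_after_Ap_succ Ap_y2 Vp1 y1_p y12 q_path q_max q_m2.
by exists m3; first lia.
Qed.

Lemma maximal_path_Vp_enum q : is_path G q -> maximal G q -> occurs y1 q ->
  exists f g, q = InfP f /\ enumerates (fun n => Vp E p (f n)) g.
Proof.
move=> q_path q_max [m q_m]; have recurs := Ap_succ_recurs q_path q_max q_m.
case: q q_path q_max q_m recurs => [x s|f] _ _ _ recurs.
  have [m' s_lt [m'_le _]] := recurs (size s).+1.
  by move: s_lt; rewrite leqNgt ltnS m'_le.
have [g g_enum] : exists g, enumerates (fun n => Vp E p (f n)) g.
  apply: ex_enumerates => a; have [m' a_lt f_m'] := recurs a.+1.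
  by exists m'; rewrite /= in f_m'; rewrite f_m'; split=> //; case: Vp_Ap_succ.
by exists f, g.
Qed.

Lemma Ap_succ_exists v : Vp E p v -> exists w, Ap E p v w.
Proof.
move=> Vp_v; have [q [q_path q_max q_start]] := ex_maximal E p.
have [n q_n] := Vp_v q q_path q_max q_start.
have y1_q : occurs y1 q by apply: (proj1 Vp_Ap_succ).
have [f [g [q_f g_enum]]] := maximal_path_Vp_enum q_path q_max y1_q.
subst q; have [k gk] := (proj2 g_enum n).1 (eq_ind_r (Vp E p) Vp_v q_n).
by exists (f (g k.+1)); rewrite -q_n -gk; apply: Ap_enumerated q_path g_enum k.
Qed.

Variables (si : T) (W : T -> Prop).
Hypotheses (Ep_si : E p si) (W_Vp : forall y, W y -> Vp E p y).

Lemma Ap_path_of_path q : is_path G q -> maximal G q -> start q = si ->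
  exists q', is_path (Ap E p) q' /\ maximal (Ap E p) q' /\
             Vi E p si (start q') /\ same_first_order W q q'.
Proof.
move=> q_path q_max q_start.
have y1_q : occurs y1 q.
  apply: (occurs_Vp_after_prefix (p := p) (s := [::]) q_path q_max) => //=.
  - by rewrite q_start.
  - exact: (proj1 Vp_Ap_succ).
  - exact: Ap_succ_neq_p Ap_y1 Ap_y2 y12.
have [f [g [q_f g_enum]]] := maximal_path_Vp_enum q_path q_max y1_q.
subst q; have f_path : forall n, E (f n) (f n.+1) := q_path.
exists (InfP (fun k => f (g k))); split; first exact: Ap_enumerated f_path g_enum.
split=> //; split; first by rewrite -q_start; apply: Vi_enumerated f_path g_enum.
apply: (same_first_order_subseq (g := g)) => //; first by case: g_enum.
by move=> n /W_Vp /(proj2 g_enum n).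
Qed.

Lemma path_of_Ap_path q' : is_path (Ap E p) q' -> maximal (Ap E p) q' ->
  Vi E p si (start q') ->
  exists q, is_path G q /\ maximal G q /\ start q = si /\ same_first_order W q q'.
Proof.
case: q' => [x s|h] q'_path q'_max [Vp_start [s0 [s0_path [s0_last s0_out]]]].
  have [w Ap_w] := Ap_succ_exists (Vp_last_Ap q'_path Vp_start).
  by case: q'_max; exists w.
have seg_ex k : exists sg, fin_path G (h k) (rcons sg (h k.+1)) /\
                           forall z, z \in sg -> ~ Vp E p z.
  by case: (q'_path k) => _ [_ [_ [_ seg]]].
have [seg seg_spec] := choice _ seg_ex.
have W_seg k z : z \in seg k -> ~ W z.
  by move=> z_in /W_Vp; case: (seg_spec k) => _; apply.
(* If [s0] is empty then [si = h 0]; otherwise [si :: belast a s1] is an extra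
   first block. *)
case: s0 s0_path s0_last s0_out => [|a s1] s0_path s0_last s0_out.
  exists (InfP (flatten_blocks h seg)); split.
    by apply: flatten_blocks_path => k; case: (seg_spec k).
  split=> //; split; first by rewrite [si]s0_last; exact: (flatten_blocks_start h seg 0).
  by apply: (same_first_order_flatten (o := 0)) => // k; rewrite addn0.
pose v k := if k is k'.+1 then h k' else si.
pose bs k := if k is k'.+1 then seg k' else belast a s1.
exists (InfP (flatten_blocks v bs)); split.
  apply: flatten_blocks_path => -[|k] /=; last by case: (seg_spec k).
  by move: s0_last => /= <-; rewrite -lastI.
split=> //; split; first exact: (flatten_blocks_start v bs 0).
apply: (same_first_order_flatten (o := 1)) => [k|[|k] z /=|[|k] //= _].
- by rewrite addn1.
- by move=> z_in /W_Vp; apply: s0_out; rewrite /= inE z_in orbT.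
- exact: W_seg.
- by move/W_Vp; apply: s0_out; rewrite /= inE eqxx.
Qed.

End TwoSuccessors.

Theorem lemma4p9 (T : finType) (E : rel T) (p s1 s2 : T) (i : nat) :
  is_CFG E ->
  s1 != s2 -> E p s1 -> E p s2 ->
  #|[set y | E p y]| = 2 ->
  (exists y1 y2, y1 <> y2 /\ Ap E p p y1 /\ Ap E p p y2) ->
  (i = 1 \/ i = 2) ->
  let si := if i == 1 then s1 else s2 in
  let W := fun y => Vp E p y /\ y <> p in
  (forall q, is_path (fun a b => E a b) q -> maximal (fun a b => E a b) q ->
     start q = si ->
     exists q', is_path (Ap E p) q' /\ maximal (Ap E p) q' /\
                Vi E p si (start q') /\ same_first_order W q q')
  /\
  (forall q', is_path (Ap E p) q' -> maximal (Ap E p) q' ->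
     Vi E p si (start q') ->
     exists q, is_path (fun a b => E a b) q /\ maximal (fun a b => E a b) q /\
               start q = si /\ same_first_order W q q').
Proof.
move=> _ _ Ep_s1 Ep_s2 _ [y1 [y2 [y12 [Ap_y1 Ap_y2]]]] _ si W.
have Ep_si : E p si by rewrite /si; case: ifP.
have W_Vp y : W y -> Vp E p y by case.
split=> [q|q']; [exact: (Ap_path_of_path (W := W) y12 Ap_y1 Ap_y2 Ep_si W_Vp)
                |exact: (path_of_Ap_path (si := si) (W := W) y12 Ap_y1 Ap_y2 W_Vp)].
Qed.
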